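(* Consider the miners' game with $n$ miners $s_1,\dots,s_n$, parameters $R>0$, $N>0$, unit prices $\lambda_1,\dots,\lambda_n>0$, where miner $s_i$ chooses $\mu_i\ge0$ and receives profit $P_i=\frac{\mu_i}{\sum_{j=1}^n\mu_j}RN-\lambda_i\mu_i$ (the fraction being $0$ if $\sum_j\mu_j=0$). Let $q$ be the number of miners with a nonzero strategy in a Nash equilibrium of this game. Then $q\ge 2$.
   Context: A Nash equilibrium is a profile $(\mu_1^*,\dots,\mu_n^* )$ with all $\mu_i^*\ge 0$ such that no miner $s_i$ can strictly increase $P_i$ by unilaterally changing $\mu_i^*$ to another value $\mu_i\ge0$. *)

From HB Require Import structures.
From mathcomp Require Import all_boot all_order all_algebra.
Set Implicit Arguments. Unset Strict Implicit. Unset Printing Implicit Defensive.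
Import Order.TTheory GRing.Theory Num.Theory.
Local Open Scope ring_scope.

Definition share (K : realFieldType) (n : nat) (mu : 'I_n -> K) (i : 'I_n) : K :=
  let S := \sum_(j < n) mu j in if S == 0 then 0 else mu i / S.

Definition profit (K : realFieldType) (n : nat) (R N : K) (lam : 'I_n -> K)
  (mu : 'I_n -> K) (i : 'I_n) : K :=
  share mu i * R * N - lam i * mu i.

Definition deviate (K : realFieldType) (n : nat) (mu : 'I_n -> K) (i : 'I_n) (x : K)
  : 'I_n -> K := fun j => if j == i then x else mu j.

Definition nash_equilibrium (K : realFieldType) (n : nat) (R N : K) (lam : 'I_n -> K)
  (mu : 'I_n -> K) : Prop :=
  (forall i, 0 <= mu i) /\
  (forall (i : 'I_n) (x : K), 0 <= x ->
     ~ (profit R N lam mu i < profit R N lam (deviate mu i x) i)).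

Definition num_active (K : realFieldType) (n : nat) (mu : 'I_n -> K) : nat :=
  #|[set i : 'I_n | mu i != 0]|.

(** A lone active miner collects the whole reward R N whatever its stake, so it
    gains by halving a positive stake; and if nobody mines, any small positive
    stake earns almost all of R N. *)

From HB Require Import structures.
From mathcomp Require Import all_boot all_order all_algebra.
From mathcomp Require Import ring lra.
Set Implicit Arguments. Unset Strict Implicit. Unset Printing Implicit Defensive.
Import Order.TTheory GRing.Theory Num.Theory.
Local Open Scope ring_scope.

Section MinersGame.

Variables (K : realFieldType) (n : nat).
Implicit Types (mu : 'I_n -> K) (i : 'I_n).

Definition idle_except mu i := forall j, j != i -> mu j = 0.

Lemma sum_idle_except mu i : idle_except mu i -> \sum_(j < n) mu j = mu i.
Proof. by move=> idle; rewrite (bigD1 i) //= big1 ?addr0. Qed.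

Lemma idle_except_deviate mu i x : idle_except mu i -> idle_except (deviate mu i x) i.
Proof. by move=> idle j ji; rewrite /deviate (negbTE ji) idle. Qed.

Lemma num_active_le1_idle_except mu :
  (0 < n)%N -> (num_active mu <= 1)%N -> exists i, idle_except mu i.
Proof.
move=> n_gt0 /card_le1P le1.
have [A0 | [i iA]] := set_0Vmem [set i : 'I_n | mu i != 0].
  exists (Ordinal n_gt0) => j _; apply/eqP/negbNE/negP => muj.
  by have := in_set0 j; rewrite -A0 inE muj.
exists i => j ji; apply/eqP/negbNE/negP => muj.
have : j \in pred1 i by rewrite -(le1 i iA) inE.
by rewrite inE (negbTE ji).
Qed.

Variables (R N : K) (lam : 'I_n -> K).

Lemma profit_idle_except mu i : idle_except mu i ->
  profit R N lam mu i = (if mu i == 0 then 0 else R * N) - lam i * mu i.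
Proof.
move=> idle; rewrite /profit /share (sum_idle_except idle).
by have [-> | mu_i] := eqVneq (mu i) 0; rewrite ?mul0r // divff ?mul1r.
Qed.

Lemma sole_miner_profits_by_deviating mu i :
  0 < R -> 0 < N -> 0 < lam i -> 0 <= mu i -> idle_except mu i ->
  exists2 x, 0 <= x & profit R N lam mu i < profit R N lam (deviate mu i x) i.
Proof.
move=> R_gt0 N_gt0 lam_gt0 mu_ge0 idle.
have RN_gt0 : 0 < R * N by rewrite mulr_gt0.
have profit_dev x : x != 0 ->
    profit R N lam (deviate mu i x) i = R * N - lam i * x.
  move=> x0; rewrite (profit_idle_except (idle_except_deviate x idle)).
  by rewrite /deviate eqxx (negbTE x0).
rewrite (profit_idle_except idle).
have [mu0 | mu_neq0] := eqVneq (mu i) 0.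
  set x := R * N / (2 * lam i).
  have x_gt0 : 0 < x by rewrite divr_gt0 ?mulr_gt0.
  have lam_x : lam i * x = R * N / 2 by rewrite /x; field; rewrite gt_eqF.
  exists x; first exact: ltW.
  rewrite profit_dev ?gt_eqF // mu0 lam_x; lra.
have mu_gt0 : 0 < mu i by rewrite lt_def mu_neq0.
have lam_mu_gt0 : 0 < lam i * mu i by rewrite mulr_gt0.
exists (mu i / 2); first lra.
rewrite profit_dev; last by rewrite gt_eqF //; lra.
rewrite mulrA; lra.
Qed.

End MinersGame.

Theorem corollary2 (K : realFieldType) (n : nat) (R N : K) (lam : 'I_n -> K)
  (mu : 'I_n -> K) :
  (0 < n)%N -> 0 < R -> 0 < N -> (forall i, 0 < lam i) ->
  nash_equilibrium R N lam mu ->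
  (2 <= num_active mu)%N.
Proof.
move=> n_gt0 R_gt0 N_gt0 lam_gt0 [mu_ge0 no_deviation].
rewrite leqNgt ltnS; apply/negP => /(num_active_le1_idle_except n_gt0) [i idle].
have [x x_ge0 better] :=
  sole_miner_profits_by_deviating R_gt0 N_gt0 (lam_gt0 i) (mu_ge0 i) idle.
exact: no_deviation i x x_ge0 better.
Qed.
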